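(* Let $d \geq 1$ and $\epsilon \geq 0$, $\kappa > 0$ be real numbers. Let $\mathbf{h}_1, \mathbf{h}_2 \in \mathbb{R}^d$ be two state vectors of an RNN with unit Euclidean norm, and let $\tilde{\mathbf{h}}_1, \tilde{\mathbf{h}}_2 \in \{\pm 1\}^d$ be their saturated versions. Assume the RNN is $\epsilon$-saturated with respect to these states, i.e. $\|\mathbf{h}_i - \tilde{\mathbf{h}}_i\|_2 \leq \epsilon$ for $i \in \{1,2\}$. If $\cos(\mathbf{h}_1, \mathbf{h}_2) \geq 1 - \kappa$ with $$\sqrt{\kappa} < \sqrt{2}\left(\frac{1}{\sqrt{d}} - \epsilon\right),$$ then $\tilde{\mathbf{h}}_1 = \tilde{\mathbf{h}}_2$ (i.e. the two vectors represent the same state of the saturated RNN / DFA).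
   Context: An RNN state vector $\mathbf{h}(x,\theta) \in \mathbb{R}^d$ is viewed as a function of the input string $x$ and the parameter vector $\theta$ of the network (e.g. a simple RNN $\mathbf{h}_{i+1} = \tanh(U\mathbf{h}_i + V\mathbf{x}_{i+1})$). Its saturated version is $\tilde{\mathbf{h}}(x,\theta) = \lim_{\rho \to \infty} \mathbf{h}(x, \rho\theta)$, which for a $\tanh$ RNN takes values in $\{\pm 1\}^d$. Here $\cos(\mathbf{u},\mathbf{v}) = \mathbf{u}^\top \mathbf{v} / (\|\mathbf{u}\|_2 \|\mathbf{v}\|_2)$ denotes cosine similarity. *)

From mathcomp Require Import all_boot all_order all_algebra.
Set Implicit Arguments. Unset Strict Implicit. Unset Printing Implicit Defensive.
Import Order.TTheory GRing.Theory Num.Theory.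
Local Open Scope ring_scope.

Definition dotv (R : rcfType) (d : nat) (u v : 'rV[R]_d) : R :=
  \sum_(i < d) u ord0 i * v ord0 i.

Definition norm2 (R : rcfType) (d : nat) (u : 'rV[R]_d) : R :=
  Num.sqrt (dotv u u).

Definition cosv (R : rcfType) (d : nat) (u v : 'rV[R]_d) : R :=
  dotv u v / (norm2 u * norm2 v).

Definition is_sign_vector (R : rcfType) (d : nat) (u : 'rV[R]_d) : Prop :=
  forall i : 'I_d, u ord0 i = 1 \/ u ord0 i = -1.

From mathcomp Require Import all_boot all_order all_algebra.
From mathcomp Require Import ring lra.
Set Implicit Arguments.
Unset Strict Implicit.
Unset Printing Implicit Defensive.
Import Order.TTheory GRing.Theory Num.Theory.
Local Open Scope ring_scope.

(* If the two saturated states differ, they differ by 2 in some coordinate, so by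
   the triangle inequality the unit vectors h1, h2 are at distance at least
   2 (1 - eps).  On the other hand, for unit vectors ||h1 - h2||^2 = 2 - 2 cos,
   so ||h1 - h2|| <= sqrt 2 sqrt kappa.  Since 1 / sqrt d <= 1, the hypothesis on
   kappa makes these two bounds incompatible. *)

Section EuclideanSpace.
Variables (R : rcfType) (d : nat).
Implicit Types u v : 'rV[R]_d.

Lemma dotvv_ge0 u : 0 <= dotv u u.
Proof. by apply: sumr_ge0 => i _; rewrite -expr2 sqr_ge0. Qed.

Lemma sqr_coord_le_dotvv u (i : 'I_d) : u ord0 i ^+ 2 <= dotv u u.
Proof.
rewrite /dotv (bigD1 i) //= expr2 lerDl.
by apply: sumr_ge0 => j _; rewrite -expr2 sqr_ge0.
Qed.

Lemma norm_coord_le_norm2 u (i : 'I_d) : `|u ord0 i| <= norm2 u.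
Proof. by rewrite /norm2 -sqrtr_sqr ler_wsqrtr ?sqr_coord_le_dotvv. Qed.

Lemma norm2_eq1_dotvv u : norm2 u = 1 -> dotv u u = 1.
Proof. by move=> u1; rewrite -(sqr_sqrtr (dotvv_ge0 u)) -/(norm2 u) u1 expr1n. Qed.

Lemma dotvvB u v : dotv (u - v) (u - v) = dotv u u + dotv v v - 2 * dotv u v.
Proof.
rewrite /dotv mulr_sumr -big_split -sumrB /=; apply: eq_bigr => i _.
by rewrite !mxE; ring.
Qed.

Lemma unit_dotvvB u v :
  norm2 u = 1 -> norm2 v = 1 -> dotv (u - v) (u - v) = 2 * (1 - cosv u v).
Proof.
move=> u1 v1; rewrite dotvvB /cosv u1 v1 !norm2_eq1_dotvv // mulr1 divr1.
ring.
Qed.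

Lemma unit_norm2B_le_cos u v (kappa : R) :
  norm2 u = 1 -> norm2 v = 1 -> 1 - kappa <= cosv u v ->
  norm2 (u - v) <= Num.sqrt 2 * Num.sqrt kappa.
Proof.
move=> u1 v1 cos_ge; rewrite -sqrtrM ?ler0n // /norm2 ler_wsqrtr //.
by rewrite unit_dotvvB //; lra.
Qed.

Lemma neq_sign_vectors_coord_gap u v :
  is_sign_vector u -> is_sign_vector v -> u != v ->
  exists i : 'I_d, `|u ord0 i - v ord0 i| = 2.
Proof.
move=> su sv neq_uv.
have /existsP[i neq_i] : [exists i, u ord0 i != v ord0 i].
  apply: contraR neq_uv => /existsPn eq_uv.
  by apply/eqP/rowP => i; apply/eqP/negPn.
exists i; move: neq_i.
case: (su i) => ->; case: (sv i) => ->; rewrite ?eqxx // => _;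
  by rewrite ?opprK -?opprD ?normrN ger0_norm; lra.
Qed.

Lemma norm2B_ge_near_distinct_sign u v su sv (eps : R) :
  is_sign_vector su -> is_sign_vector sv -> su != sv ->
  norm2 (u - su) <= eps -> norm2 (v - sv) <= eps ->
  2 * (1 - eps) <= norm2 (u - v).
Proof.
move=> ssu ssv /(neq_sign_vectors_coord_gap ssu ssv)[i gap_i] u_near v_near.
have du := le_trans (norm_coord_le_norm2 (u - su) i) u_near.
have dv := le_trans (norm_coord_le_norm2 (v - sv) i) v_near.
have duv := norm_coord_le_norm2 (u - v) i.
rewrite !mxE in du dv duv.
have tri : 2 <= `|u ord0 i - v ord0 i| + `|u ord0 i - su ord0 i|
                 + `|v ord0 i - sv ord0 i|.
  rewrite -gap_i (_ : su ord0 i - sv ord0 i = u ord0 i - v ord0 i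
                     - (u ord0 i - su ord0 i) + (v ord0 i - sv ord0 i)); last by ring.
  by rewrite (le_trans (ler_normD _ _)) // lerD2r ler_normB.
lra.
Qed.

End EuclideanSpace.

Lemma inv_sqrt_nat_le1 (R : rcfType) (d : nat) :
  (1 <= d)%N -> 1 / Num.sqrt (d%:R : R) <= 1.
Proof.
move=> d_gt0; have sqrt_ge1 : 1 <= Num.sqrt (d%:R : R).
  by rewrite -{1}sqrtr1; apply: ler_wsqrtr; rewrite ler1n.
by rewrite div1r invf_le1 // (lt_le_trans ltr01 sqrt_ge1).
Qed.

Theorem proposition1 (R : rcfType) (d : nat) (eps kappa : R)
  (h1 h2 ht1 ht2 : 'rV[R]_d) :
  (1 <= d)%N -> 0 <= eps -> 0 < kappa ->
  norm2 h1 = 1 -> norm2 h2 = 1 ->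
  is_sign_vector ht1 -> is_sign_vector ht2 ->
  norm2 (h1 - ht1) <= eps -> norm2 (h2 - ht2) <= eps ->
  cosv h1 h2 >= 1 - kappa ->
  Num.sqrt kappa < Num.sqrt 2 * (1 / Num.sqrt (d%:R) - eps) ->
  ht1 = ht2.
Proof.
move=> d_gt0 _ _ h1_unit h2_unit s1 s2 h1_near h2_near cos_ge kappa_small.
apply/eqP; apply: contraT => neq_ht.
have far := norm2B_ge_near_distinct_sign s1 s2 neq_ht h1_near h2_near.
have close := unit_norm2B_le_cos h1_unit h2_unit cos_ge.
have sqrt2_gt0 : 0 < Num.sqrt (2 : R) by rewrite sqrtr_gt0.
have sqrt2_sq : Num.sqrt (2 : R) * Num.sqrt 2 = 2 by rewrite -expr2 sqr_sqrtr.
have kappa_lt : Num.sqrt kappa < Num.sqrt 2 * (1 - eps).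
  apply: (lt_le_trans kappa_small); apply: ler_wpM2l; first exact: ltW.
  by rewrite lerD2r inv_sqrt_nat_le1.
have : Num.sqrt 2 * Num.sqrt kappa < 2 * (1 - eps).
  by rewrite -[in X in _ < X]sqrt2_sq -mulrA ltr_pM2l.
lra.
Qed.
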